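(* Let $\mathcal{A}$ be a finite nonempty set of strata with $|\mathcal{A}| = r$. For each $j \in \mathcal{A}$ let $a_j = n_j\sigma_j > 0$ and let $s_j > 0$ be the current sample size of stratum $j$. Let $M$ be a real number with $0 < M \le \sum_{j\in\mathcal{A}} s_j$. Run the procedure $\mathrm{SSR}(\mathcal{A}, M, \mathcal{L})$ defined in the context. Then the procedure terminates, and the resulting values $(\mathcal{L}[j])_{j\in\mathcal{A}}$ form an optimal solution of the problem $$\text{minimize } \sum_{j\in\mathcal{A}} \frac{n_j^2\sigma_j^2}{x_j} \quad\text{subject to } 0 \le x_j \le s_j \ (j\in\mathcal{A}),\quad \sum_{j\in\mathcal{A}} x_j = M,$$ over real vectors $(x_j)_{j\in\mathcal{A}}$; i.e. $\mathcal{L}$ is a variance-optimal reduction of the stratified random sample to total size $M$. Moreover, the worst-case running time of $\mathrm{SSR}$ is $O(r^2)$.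
   Context: Setting: a data set of $n$ real values is partitioned into strata; stratum $j$ contains $n_j$ values with (population) standard deviation $\sigma_j$. A stratified random sample holds $s_j$ values drawn uniformly without replacement from stratum $j$. The variance of the estimator $\bar y=\frac1n\sum_j n_j\bar y_j$ of the population mean (where $\bar y_j$ is the mean of the sample of stratum $j$) is $V = \frac{1}{n^2}\sum_j \frac{n_j^2\sigma_j^2}{s_j} - \frac{1}{n^2}\sum_j n_j\sigma_j^2$; since the second term does not depend on the sample sizes, reducing the total sample size to $M$ with minimum increase of $V$ (''variance-optimal sample size reduction'') is the optimization problem in the claim. Procedure $\mathrm{SSR}(\mathcal{A}, M, \mathcal{L})$ (writes into an array $\mathcal{L}$ indexed by strata): 1. Set $\mathcal{O} \gets \emptyset$. 2. For each $j\in\mathcal{A}$: set $M_j \gets M\cdot n_j\sigma_j / \sum_{t\in\mathcal{A}} n_t\sigma_t$ (the Neyman allocation of budget $M$ among $\mathcal{A}$); if $s_j > M_j$ then add $j$ to $\mathcal{O}$ (stratum $j$ is ''oversized''), else set $\mathcal{L}[j] \gets s_j$. 3. If $\mathcal{O} = \mathcal{A}$, set $\mathcal{L}[j] \gets M_j$ for all $j\in\mathcal{A}$ and stop. 4. Otherwise call $\mathrm{SSR}(\mathcal{O},\, M - \sum_{j\in\mathcal{A}\setminus\mathcal{O}} s_j,\, \mathcal{L})$. *)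

From HB Require Import structures.
From mathcomp Require Import all_boot all_order all_algebra.
Set Implicit Arguments. Unset Strict Implicit. Unset Printing Implicit Defensive.
Import Order.TTheory GRing.Theory Num.Theory.
Local Open Scope ring_scope.

Section SSR.
Variables (R : realFieldType) (I : finType).
Variables (n sigma s : I -> R).

Definition weight (j : I) : R := n j * sigma j.

(* Returns the final array L (None if fuel ran out) together with a cost
   counter: each call costs #|A| + 1 elementary steps (computing the sum,
   the loop over A, and a constant overhead). *)
Fixpoint ssr_run (fuel : nat) (A : {set I}) (M : R) (L : I -> R)
  : option (I -> R) * nat :=
  match fuel with
  | 0 => (None, 0%N)
  | fuel'.+1 =>
    let S := \sum_(t in A) weight t in
    let Mj := fun j => M * weight j / S in
    let O := [set j in A | Mj j < s j] in
    let L' := fun j => if (j \in A) && (j \notin O) then s j else L j in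
    if O == A then
      (Some (fun j => if j \in A then Mj j else L' j), (#|A|.+1)%N)
    else
      let res := ssr_run fuel' O (M - \sum_(j in A :\: O) s j) L' in
      (res.1, (#|A|.+1 + res.2)%N)
  end.

Definition feasible (A : {set I}) (M : R) (x : I -> R) : Prop :=
  (forall j, j \in A -> 0 <= x j <= s j) /\ \sum_(j in A) x j = M.

Definition objective (A : {set I}) (x : I -> R) : R :=
  \sum_(j in A) (n j ^+ 2 * sigma j ^+ 2) / x j.

End SSR.

From HB Require Import structures.
From mathcomp Require Import all_boot all_order all_algebra.
From mathcomp Require Import ring zify.
Set Implicit Arguments. Unset Strict Implicit. Unset Printing Implicit Defensive.
Import Order.TTheory GRing.Theory Num.Theory.
Local Open Scope ring_scope.

(* Write a_j = n_j sigma_j and a(B) for the sum of the a_j over B.  Call x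
   levelled at c > 0 when every x_j is either c a_j or a cap s_j <= c a_j.
   Such an x_j minimises a_j^2 / t + t / c^2 over 0 < t <= s_j, so summing
   under the budget constraint makes a levelled x optimal.  SSR returns a
   levelled vector: the strata it caps at a call satisfy s_j <= (M / a(A)) a_j,
   and the level M' / a(O) of the recursive call is at least M / a(A), so the
   caps stay below the final level.  Every call strictly shrinks A, so the
   total work is at most 1 + 2 + ... + (|A| + 1). *)

Lemma psumr_gt0 (R : numDomainType) (I : finType) (A : {set I}) (f : I -> R) :
  A != set0 -> (forall j, j \in A -> 0 < f j) -> 0 < \sum_(j in A) f j.
Proof.
case/set0Pn => j hj hf; rewrite (bigD1 j) //=.
apply: (lt_le_trans (hf j hj)); rewrite lerDl.
by apply: sumr_ge0 => i /andP[hi _]; apply/ltW/hf.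
Qed.

Lemma lagrangian_min (R : realFieldType) (a c l x s : R) :
  0 < a -> 0 < c -> 0 < x -> x <= s ->
  l = c * a \/ (l = s /\ s <= c * a) ->
  a ^+ 2 / l + l / c ^+ 2 <= a ^+ 2 / x + x / c ^+ 2.
Proof.
move=> ha hc hx hxs [->|[-> hsc]]; rewrite -subr_ge0.
- have -> : a ^+ 2 / x + x / c ^+ 2 - (a ^+ 2 / (c * a) + c * a / c ^+ 2)
      = (x - c * a) ^+ 2 / (x * c ^+ 2).
    by field; rewrite !gt_eqF.
  by rewrite divr_ge0 ?sqr_ge0 // mulr_ge0 ?sqr_ge0 ?ltW.
- have hs : 0 < s by exact: lt_le_trans hxs.
  have -> : a ^+ 2 / x + x / c ^+ 2 - (a ^+ 2 / s + s / c ^+ 2)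
      = (s - x) * ((a ^+ 2 * c ^+ 2 - x * s) / (x * s * c ^+ 2)).
    by field; rewrite !gt_eqF.
  have xs_le : x * s <= (c * a) ^+ 2.
    by rewrite expr2 ler_pM ?(ltW hx) ?(ltW hs) ?(le_trans hxs hsc).
  apply: mulr_ge0; first by rewrite subr_ge0.
  apply: divr_ge0; first by rewrite subr_ge0 (mulrC (a ^+ 2)) -exprMn.
  by rewrite ltW // !mulr_gt0 // exprn_gt0.
Qed.

Lemma bin2SS_leq (r : nat) : (0 < r)%N -> ('C(r.+2, 2) <= 3 * r ^ 2)%N.
Proof. by move=> r_gt0; rewrite bin2 -divn2 -ltnS ltn_divLR //=; nia. Qed.

Section SSRAnalysis.

Variables (R : realFieldType) (I : finType) (n sigma s : I -> R).

Implicit Types (A : {set I}) (M c : R) (L x : I -> R).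

Local Notation w := (weight n sigma).
Local Notation run := (ssr_run n sigma s).

Definition neyman (A : {set I}) (M : R) (j : I) : R :=
  M * w j / \sum_(t in A) w t.

Definition level (A : {set I}) (M : R) : R := M / \sum_(t in A) w t.

Definition oversized (A : {set I}) (M : R) : {set I} :=
  [set j in A | neyman A M j < s j].

Definition residual (A : {set I}) (M : R) : R :=
  M - \sum_(j in A :\: oversized A M) s j.

Definition cap_undersized (A : {set I}) (M : R) (L : I -> R) (j : I) : R :=
  if (j \in A) && (j \notin oversized A M) then s j else L j.

Definition levelled (A : {set I}) (c : R) (x : I -> R) : Prop :=
  forall j, j \in A -> x j = c * w j \/ (x j = s j /\ s j <= c * w j).

Lemma ssr_runS fuel A M L :
  run fuel.+1 A M L =
  if oversized A M == A then
    (Some (fun j => if j \in A then neyman A M j else cap_undersized A M L j),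
     #|A|.+1)
  else
    let res := run fuel (oversized A M) (residual A M) (cap_undersized A M L) in
    (res.1, (#|A|.+1 + res.2)%N).
Proof. by []. Qed.

Lemma oversized_sub A M : oversized A M \subset A.
Proof. by apply/subsetP => j; rewrite inE => /andP[]. Qed.

Lemma oversized_proper A M : oversized A M != A -> oversized A M \proper A.
Proof. by move=> nOA; rewrite properEneq nOA oversized_sub. Qed.

Lemma ssr_run_cost fuel A M L : ((run fuel A M L).2 <= 'C(#|A|.+2, 2))%N.
Proof.
elim: fuel A M L => [//|fuel IH] A M L.
rewrite ssr_runS binS bin1; case: ifP => [_|/negbT nOA] /=; first exact: leq_addl.
rewrite addnC leq_add2r (leq_trans (IH _ _ _)) // leq_bin2l // ltnS.
by apply: proper_card; apply: oversized_proper.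
Qed.

Lemma ssr_run_terminates fuel A M L :
  (#|A| < fuel)%N -> exists Lf, (run fuel A M L).1 = Some Lf.
Proof.
elim: fuel A M L => [//|fuel IH] A M L lt_A_fuel.
rewrite ssr_runS; case: ifP => [_|/negbT nOA] /=; first by eexists.
apply: IH; rewrite -ltnS (leq_trans _ lt_A_fuel) // ltnS.
by apply: proper_card; apply: oversized_proper.
Qed.

Lemma neyman_level A M j : neyman A M j = level A M * w j.
Proof. exact: mulrAC. Qed.

Lemma sum_neyman A M :
  \sum_(t in A) w t != 0 -> \sum_(j in A) neyman A M j = M.
Proof. by move=> nzS; rewrite -big_distrl -big_distrr /= mulfK. Qed.

Lemma undersized_le_level {A M j} :
  j \in A :\: oversized A M -> s j <= level A M * w j.
Proof.
by rewrite !inE => /andP[/[swap] -> /=]; rewrite -leNgt neyman_level.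
Qed.

Lemma residual_le A M :
  M <= \sum_(j in A) s j -> residual A M <= \sum_(j in oversized A M) s j.
Proof.
by rewrite lerBlDr (big_setID (oversized A M)) (setIidPr (oversized_sub A M)).
Qed.

Lemma residual_ge A M :
  \sum_(t in A) w t != 0 ->
  level A M * \sum_(t in oversized A M) w t <= residual A M.
Proof.
set O := oversized A M => nzS.
have OA : O \subset A := oversized_sub A M.
have splitM : M = level A M * \sum_(t in O) w t + level A M * \sum_(t in A :\: O) w t.
  by rewrite -mulrDr -{1}(setIidPr OA) -big_setID divfK.
rewrite /residual {2}splitM -addrA lerDl subr_ge0 big_distrr /=.
by apply: ler_sum => j; apply: undersized_le_level.
Qed.

Definition ssr_spec A M c0 L Lf : Prop :=
  [/\ forall j, j \notin A -> Lf j = L j,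
      forall j, j \in A -> 0 < Lf j <= s j,
      \sum_(j in A) Lf j = M
    & exists2 c, c0 <= c & levelled A c Lf].

Section Invariant.

Variables (A : {set I}) (M c0 : R).
Hypotheses (w_gt0 : forall j, j \in A -> 0 < w j) (s_gt0 : forall j, j \in A -> 0 < s j).
Hypotheses (c0_gt0 : 0 < c0) (c0_le : c0 * \sum_(t in A) w t <= M).

Lemma ssr_spec_final L :
  M <= \sum_(j in A) s j -> oversized A M = A ->
  ssr_spec A M c0 L (fun j => if j \in A then neyman A M j else cap_undersized A M L j).
Proof.
move=> le_M eOA; have [A0|nzA] := eqVneq A set0.
  move: c0_le le_M; rewrite A0 !big_set0 mulr0 => ge_M le_M.
  split=> [j _|j||]; rewrite ?inE ?big_set0 //.
  - by rewrite /cap_undersized inE.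
  - by apply/eqP; rewrite eq_le ge_M le_M.
  - by exists c0 => // j; rewrite inE.
have S_gt0 : 0 < \sum_(t in A) w t by exact: psumr_gt0.
have c0_le_lev : c0 <= level A M by rewrite ler_pdivlMr.
split=> [j /negbTE jA|j jA||].
- by rewrite /cap_undersized jA.
- rewrite jA neyman_level mulr_gt0 ?w_gt0 ?(lt_le_trans c0_gt0) //=.
  by move: jA; rewrite -{1}eOA inE neyman_level => /andP[_ /ltW].
- by rewrite (eq_bigr (neyman A M)) ?sum_neyman ?gt_eqF // => j ->.
- by exists (level A M) => // j ->; left; rewrite neyman_level.
Qed.

Lemma ssr_spec_cap L Lf :
  A != set0 ->
  ssr_spec (oversized A M) (residual A M) (level A M) (cap_undersized A M L) Lf ->
  ssr_spec A M c0 L Lf.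
Proof.
set O := oversized A M => nzA [Lf_out Lf_in sumO [c le_c levO]].
have OA : O \subset A := oversized_sub A M.
have Lf_cap j : j \in A :\: O -> Lf j = s j.
  by rewrite inE => /andP[jO jA]; rewrite Lf_out // /cap_undersized jA jO.
split=> [j jA|j jA||].
- rewrite Lf_out /cap_undersized ?(negbTE jA) //.
  by apply: contra jA; apply/subsetP.
- have [/Lf_in //|jO] := boolP (j \in O).
  have jAO : j \in A :\: O by rewrite inE jO.
  by rewrite Lf_cap // lexx andbT s_gt0.
- by rewrite (big_setID O) (setIidPr OA) /= sumO (eq_bigr _ Lf_cap) subrK.
have c0_le_lev : c0 <= level A M by rewrite ler_pdivlMr ?psumr_gt0.
exists c; first exact: le_trans le_c.
move=> j jA; have [/levO //|jO] := boolP (j \in O).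
have jAO : j \in A :\: O by rewrite inE jO.
right; split; first exact: Lf_cap.
apply: le_trans (undersized_le_level jAO) _.
by rewrite ler_wpM2r // ltW // w_gt0.
Qed.

End Invariant.

Lemma ssr_run_correct fuel A M L c0 Lf :
  (forall j, j \in A -> 0 < w j) -> (forall j, j \in A -> 0 < s j) ->
  0 < c0 -> c0 * \sum_(t in A) w t <= M <= \sum_(j in A) s j ->
  (run fuel A M L).1 = Some Lf -> ssr_spec A M c0 L Lf.
Proof.
elim: fuel A M L c0 => [//|fuel IH] A M L c0 w_gt0 s_gt0 c0_gt0 /andP[c0_le le_M].
rewrite ssr_runS; case: ifP => [/eqP eOA [<-]|/negbT nOA /= runO].
  exact: ssr_spec_final.
have nzA : A != set0.
  by apply: contra nOA => /eqP A0; rewrite A0 -subset0 oversized_sub.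
have S_gt0 : 0 < \sum_(t in A) w t by exact: psumr_gt0.
have OA := oversized_sub A M.
apply: (ssr_spec_cap w_gt0 s_gt0 c0_le nzA); apply: (IH _ _ _ _ _ _ _ _ runO).
- by move=> j /(subsetP OA); apply: w_gt0.
- by move=> j /(subsetP OA); apply: s_gt0.
- by rewrite divr_gt0 // (lt_le_trans _ c0_le) ?mulr_gt0.
- by rewrite residual_ge ?residual_le ?gt_eqF.
Qed.

Lemma levelled_optimal A M c L x :
  0 < c -> (forall j, j \in A -> 0 < w j) ->
  feasible s A M L -> levelled A c L ->
  feasible s A M x -> (forall j, j \in A -> 0 < x j) ->
  objective n sigma A L <= objective n sigma A x.
Proof.
move=> c_gt0 w_gt0 [_ sumL] levL [x_bnd sumx] x_gt0.
have : \sum_(j in A) (n j ^+ 2 * sigma j ^+ 2 / L j + L j / c ^+ 2)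
       <= \sum_(j in A) (n j ^+ 2 * sigma j ^+ 2 / x j + x j / c ^+ 2).
  apply: ler_sum => j jA; case/andP: (x_bnd j jA) => _ xs; rewrite -exprMn.
  exact: lagrangian_min (w_gt0 j jA) c_gt0 (x_gt0 j jA) xs (levL j jA).
by rewrite !big_split -!mulr_suml /= sumL sumx lerD2r.
Qed.

End SSRAnalysis.

Theorem theorem1 (R : realFieldType) (I : finType) (A : {set I})
  (n sigma s : I -> R) (M : R) (L0 : I -> R) :
  A != set0 ->
  (forall j, j \in A -> 0 < n j * sigma j) ->
  (forall j, j \in A -> 0 < s j) ->
  0 < M -> M <= \sum_(j in A) s j ->
  exists L : I -> R,
    (ssr_run n sigma s #|A|.+1 A M L0).1 = Some L /\
    ((ssr_run n sigma s #|A|.+1 A M L0).2 <= 3 * #|A| ^ 2)%N /\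
    feasible s A M L /\
    (forall j, j \in A -> 0 < L j) /\
    (forall x : I -> R, feasible s A M x -> (forall j, j \in A -> 0 < x j) ->
       objective n sigma A L <= objective n sigma A x).
Proof.
move=> nzA w_gt0 s_gt0 M_gt0 le_M.
have S_gt0 : 0 < \sum_(t in A) weight n sigma t by exact: psumr_gt0.
have lev_gt0 : 0 < level n sigma A M by exact: divr_gt0.
have [L runL] := ssr_run_terminates n sigma s M L0 (ltnSn #|A|).
have inv : level n sigma A M * \sum_(t in A) weight n sigma t <= M <= \sum_(j in A) s j.
  by rewrite divfK ?gt_eqF // lexx le_M.
have [_ L_bnd sumL [c c_ge levL]] := ssr_run_correct w_gt0 s_gt0 lev_gt0 inv runL.
have feasL : feasible s A M L by split=> // j /L_bnd /andP[/ltW -> ->].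
exists L; split=> //; split.
  by rewrite (leq_trans (ssr_run_cost n sigma s _ A M L0)) ?bin2SS_leq ?card_gt0.
split=> //; split=> [j /L_bnd /andP[] //|x].
exact: levelled_optimal (lt_le_trans lev_gt0 c_ge) w_gt0 feasL levL.
Qed.
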